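(* Let $X$ be a topological space and $k$ a complete non-Archimedean valued field. For every $x\in \mathrm{BSC}_k(X)$ the support $\mathrm{supp}(x)=\{f\in C_{bd}(X,k): |f|_x=0\}$ is a maximal ideal of $C_{bd}(X,k)$, and the map $$\mathscr F_{\mathrm{supp}}:\mathrm{BSC}_k(X)\to \mathrm{UF}(X),\qquad x\mapsto \mathscr F_{\mathrm{supp}(x)}=\{U\in \mathrm{CO}(X): 1_U\notin \mathrm{supp}(x)\}$$ is a homeomorphism.
   Context: Topological spaces are not assumed Hausdorff. $k$ is a field complete with respect to a non-Archimedean absolute value $|\cdot|$ of rank one (possibly trivial). $C_{bd}(X,k)$ is the commutative $k$-algebra of bounded continuous functions $X\to k$ with the supremum norm $\|f\|=\sup_{x\in X}|f(x)|$; for $U\subset X$ clopen, $1_U$ is its characteristic function. $\mathrm{CO}(X)$ denotes the set of clopen (closed and open) subsets of $X$. An ultrafiltre of $\mathrm{CO}(X)$ is a subset $\mathscr F\subset \mathrm{CO}(X)$ with: $\emptyset\notin\mathscr F$; $U\cap V\in\mathscr F$ for $U,V\in\mathscr F$; $U\cup V\in\mathscr F$ for $U\in \mathrm{CO}(X)$, $V\in\mathscr F$; and for every $U\in\mathrm{CO}(X)$, $U\in\mathscr F$ or $X\setminus U\in\mathscr F$. $\mathrm{UF}(X)$ is the set of such ultrafiltres with the topology having as basis the sets $\{\mathscr F\in\mathrm{UF}(X): U\in\mathscr F\}$, $U\in\mathrm{CO}(X)$. $\mathrm{BSC}_k(X)$ is the Berkovich spectrum $\mathcal M_k(C_{bd}(X,k))$: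 the set of multiplicative seminorms $f\mapsto |f|_x$ on $C_{bd}(X,k)$ (so $|fg|_x=|f|_x|g|_x$, $|1|_x=1$, $|f+g|_x\le\max(|f|_x,|g|_x)$, $|af|_x=|a||f|_x$ for $a\in k$) that are bounded ($|f|_x\le\|f\|$), with the weakest topology making all maps $x\mapsto|f|_x$ continuous; it is compact Hausdorff. *)

From HB Require Import structures.
From mathcomp Require Import all_boot all_algebra.
From Stdlib Require Import Reals Rtopology.

Set Implicit Arguments.
Unset Strict Implicit.
Unset Printing Implicit Defensive.

Local Open Scope R_scope.

Definition is_topology {X : Type} (O : (X -> Prop) -> Prop) : Prop :=
  O (fun _ => True) /\
  (forall U V, O U -> O V -> O (fun x => U x /\ V x)) /\
  (forall F : (X -> Prop) -> Prop, (forall U, F U -> O U) ->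
      O (fun x => exists U, F U /\ U x)).

Definition generated_topology {X : Type} (S : (X -> Prop) -> Prop)
  (U : X -> Prop) : Prop :=
  forall O : (X -> Prop) -> Prop, is_topology O -> (forall V, S V -> O V) -> O U.

Definition continuous {A B : Type} (OA : (A -> Prop) -> Prop)
  (OB : (B -> Prop) -> Prop) (f : A -> B) : Prop :=
  forall V, OB V -> OA (fun x => V (f x)).

Definition homeomorphism {A B : Type} (OA : (A -> Prop) -> Prop)
  (OB : (B -> Prop) -> Prop) (f : A -> B) : Prop :=
  exists g : B -> A,
    (forall x, g (f x) = x) /\ (forall y, f (g y) = y) /\
    continuous OA OB f /\ continuous OB OA g.

Definition clopen {X : Type} (OX : (X -> Prop) -> Prop) (U : X -> Prop) : Prop :=
  OX U /\ OX (fun x => ~ U x).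

Definition nonarch_abs (k : fieldType) (a : k -> R) : Prop :=
  (forall x, 0 <= a x) /\
  (forall x, a x = 0 <-> x = (GRing.zero : k)) /\
  (forall x y, a (GRing.mul x y) = a x * a y) /\
  (forall x y, a (GRing.add x y) <= Rmax (a x) (a y)).

Definition abs_complete (k : fieldType) (a : k -> R) : Prop :=
  forall u : nat -> k,
    (forall eps, 0 < eps -> exists N : nat, forall m n : nat,
        le N m -> le N n -> a (GRing.add (u m) (GRing.opp (u n))) < eps) ->
    exists l : k, forall eps, 0 < eps -> exists N : nat, forall n : nat,
        le N n -> a (GRing.add (u n) (GRing.opp l)) < eps.

Definition k_open (k : fieldType) (a : k -> R) (V : k -> Prop) : Prop :=
  forall y, V y -> exists eps, 0 < eps /\
     forall z, a (GRing.add z (GRing.opp y)) < eps -> V z.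

Definition is_cbd {X : Type} (OX : (X -> Prop) -> Prop) (k : fieldType)
  (a : k -> R) (f : X -> k) : Prop :=
  continuous OX (k_open a) f /\ (exists M, forall x, a (f x) <= M).

Definition Cbd {X : Type} (OX : (X -> Prop) -> Prop) (k : fieldType)
  (a : k -> R) : Type := {f : X -> k | is_cbd OX a f}.

(* The algebra
   operations of C_bd(X,k) are pointwise; they are expressed relationally
   ("h is the pointwise product of f and g").  Boundedness |f|_x <= ||f||
   is expressed as: |f|_x <= M for every bound M of |f| on X, i.e.
   |f|_x <= sup_x |f(x)|. *)
Definition is_bmult_seminorm {X : Type} (OX : (X -> Prop) -> Prop)
  (k : fieldType) (a : k -> R) (s : Cbd OX a -> R) : Prop :=
  (forall f, 0 <= s f) /\
  (forall f g h : Cbd OX a,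
      (forall x, proj1_sig h x = GRing.mul (proj1_sig f x) (proj1_sig g x)) ->
      s h = s f * s g) /\
  (forall h : Cbd OX a, (forall x, proj1_sig h x = (GRing.one k)) -> s h = 1) /\
  (forall f g h : Cbd OX a,
      (forall x, proj1_sig h x = GRing.add (proj1_sig f x) (proj1_sig g x)) ->
      s h <= Rmax (s f) (s g)) /\
  (forall (c : k) (f h : Cbd OX a),
      (forall x, proj1_sig h x = GRing.mul c (proj1_sig f x)) ->
      s h = a c * s f) /\
  (forall (f : Cbd OX a) (M : R),
      (forall x, a (proj1_sig f x) <= M) -> s f <= M).

Definition BSC {X : Type} (OX : (X -> Prop) -> Prop) (k : fieldType)
  (a : k -> R) : Type := {s : Cbd OX a -> R | is_bmult_seminorm s}.

Definition BSC_open {X : Type} (OX : (X -> Prop) -> Prop) (k : fieldType)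
  (a : k -> R) : (BSC OX a -> Prop) -> Prop :=
  generated_topology
    (fun W : BSC OX a -> Prop => exists (f : Cbd OX a) (V : R -> Prop),
        open_set V /\ forall p, W p <-> V (proj1_sig p f)).

Definition is_ideal {X : Type} (OX : (X -> Prop) -> Prop) (k : fieldType)
  (a : k -> R) (I : Cbd OX a -> Prop) : Prop :=
  (forall h : Cbd OX a, (forall x, proj1_sig h x = (GRing.zero : k)) -> I h) /\
  (forall f h : Cbd OX a,
      (forall x, proj1_sig h x = GRing.opp (proj1_sig f x)) -> I f -> I h) /\
  (forall f g h : Cbd OX a,
      (forall x, proj1_sig h x = GRing.add (proj1_sig f x) (proj1_sig g x)) ->
      I f -> I g -> I h) /\
  (forall f g h : Cbd OX a,
      (forall x, proj1_sig h x = GRing.mul (proj1_sig g x) (proj1_sig f x)) ->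
      I f -> I h).

Definition is_maximal_ideal {X : Type} (OX : (X -> Prop) -> Prop)
  (k : fieldType) (a : k -> R) (I : Cbd OX a -> Prop) : Prop :=
  is_ideal I /\ (exists f, ~ I f) /\
  (forall J : Cbd OX a -> Prop, is_ideal J -> (forall f, I f -> J f) ->
      (forall f, J f <-> I f) \/ (forall f, J f)).

Definition supp {X : Type} {OX : (X -> Prop) -> Prop} {k : fieldType}
  {a : k -> R} (p : BSC OX a) : Cbd OX a -> Prop :=
  fun f => proj1_sig p f = 0.

Definition is_indicator {X : Type} {OX : (X -> Prop) -> Prop} {k : fieldType}
  {a : k -> R} (U : X -> Prop) (h : Cbd OX a) : Prop :=
  forall x, (U x -> proj1_sig h x = (GRing.one k)) /\
            (~ U x -> proj1_sig h x = (GRing.zero : k)).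

Definition F_supp {X : Type} {OX : (X -> Prop) -> Prop} {k : fieldType}
  {a : k -> R} (p : BSC OX a) (U : X -> Prop) : Prop :=
  clopen OX U /\
  exists h : Cbd OX a, is_indicator U h /\ ~ supp p h.

Definition is_UF {X : Type} (OX : (X -> Prop) -> Prop)
  (F : (X -> Prop) -> Prop) : Prop :=
  (forall U, F U -> clopen OX U) /\
  ~ F (fun _ => False) /\
  (forall U V, F U -> F V -> F (fun x => U x /\ V x)) /\
  (forall U V, clopen OX U -> F V -> F (fun x => U x \/ V x)) /\
  (forall U, clopen OX U -> F U \/ F (fun x => ~ U x)).

Definition UF {X : Type} (OX : (X -> Prop) -> Prop) : Type :=
  {F : (X -> Prop) -> Prop | is_UF OX F}.

Definition UF_open {X : Type} (OX : (X -> Prop) -> Prop)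
  (W : UF OX -> Prop) : Prop :=
  forall F, W F -> exists U, clopen OX U /\ proj1_sig F U /\
     forall G : UF OX, proj1_sig G U -> W G.

(* Let s be a point of BSC_k(X), i.e. a bounded multiplicative seminorm on
   C_bd(X,k).  Indicators 1_U of clopen sets are idempotent, so s(1_U) is 0
   or 1, and exactly one of s(1_U), s(1_{X\U}) equals 1; hence
   F_supp(s) = {U : s(1_U) <> 0} is an ultrafilter of CO(X).  Moreover s is
   localised on every U in F_supp(s): |f| <= M on U gives s f <= M (multiply
   f by 1_U) and |f| >= c > 0 on U gives s f >= c (invert f on U).  As k is
   ultrametric, the level sets {|f| < c} are clopen, so s f is the limit
   lim_F |f| = inf {M : |f| <= M on some U in F} along F = F_supp(s); the same
   localisation shows that supp(s) is a maximal ideal.  Conversely, for every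
   clopen ultrafilter F, f |-> lim_F |f| is a point of BSC_k(X) whose support
   ultrafilter is F.  Both maps are continuous: the preimage of a basic open
   set {F : U in F} is {s : s(1_U) > 1/2}, and lim_G |f| is close to lim_F |f|
   as soon as G contains a suitable intersection of two level sets of |f|. *)

Set Warnings "-notation-overridden,-ambiguous-paths".
From HB Require Import structures.
From mathcomp Require Import all_boot all_algebra.
From Stdlib Require Import Reals Rtopology Lra.
From Stdlib Require Import Classical ClassicalEpsilon FunctionalExtensionality
  PropExtensionality ProofIrrelevance.
Import GRing.Theory.
Set Implicit Arguments.
Unset Strict Implicit.
Local Open Scope R_scope.

Lemma pred_ext {T : Type} (P Q : T -> Prop) : (forall x, P x <-> Q x) -> P = Q.
Proof.
by move=> H; apply: functional_extensionality => x; apply: propositional_extensionality.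
Qed.

(* Products of non-negative reals are approximated from above and from below:
   this is how multiplicativity passes to limits along an ultrafilter. *)
Lemma le_mul_of_gt u v w : 0 <= u -> 0 <= v ->
  (forall M N, u < M -> v < N -> w <= M * N) -> w <= u * v.
Proof.
move=> hu hv H; apply: Rnot_lt_le => hlt.
pose d := w - u * v; pose D := u + v + 1.
have hd : 0 < d by rewrite /d; lra.
have hD : 1 <= D by rewrite /D; lra.
pose e := d / (2 * D + d).
have he : e * (2 * D + d) = d by rewrite /e; field; lra.
have he0 : 0 < e by apply: Rdiv_lt_0_compat; lra.
have he1 : e < 1 by nra.
have := H (u + e) (v + e) ltac:(lra) ltac:(lra).
rewrite /d /D in hd hD he *; nra.
Qed.

Lemma mul_le_of_lt u v w : 0 <= u -> 0 <= v -> 0 <= w ->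
  (forall c d, 0 < c -> c < u -> 0 < d -> d < v -> c * d <= w) -> u * v <= w.
Proof.
move=> hu hv hw H; apply: Rnot_lt_le => hlt.
have huv : 0 < u * v by lra.
have hu' : 0 < u by case: hu => // e; rewrite -e Rmult_0_l in huv; lra.
have hv' : 0 < v by case: hv => // e; rewrite -e Rmult_0_r in huv; lra.
set l := (w + u * v) / (2 * (u * v)).
have hl : l * (2 * (u * v)) = w + u * v by rewrite /l; field; lra.
have hl1 : l < 1 by nra.
have hl0 : 0 < l by nra.
have := H (l * u) (l * v); nra.
Qed.

Section AbsoluteValue.
Variables (k : fieldType) (a : k -> R).
Hypothesis Ha : nonarch_abs a.

Lemma abs_ge0 x : 0 <= a x. Proof. by case: Ha. Qed.
Lemma abs_eq0 x : a x = 0 <-> x = GRing.zero. Proof. by case: Ha => _ []. Qed.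
Lemma abs_mul x y : a (GRing.mul x y) = a x * a y. Proof. by case: Ha => _ [] _ []. Qed.
Lemma abs_ultra x y : a (GRing.add x y) <= Rmax (a x) (a y).
Proof. by case: Ha => _ [] _ []. Qed.
Lemma abs0 : a GRing.zero = 0. Proof. exact/abs_eq0. Qed.

Lemma abs_gt0 x : x <> GRing.zero -> 0 < a x.
Proof. move=> H; have := abs_ge0 x; have : a x <> 0 by move/abs_eq0. lra. Qed.

Lemma abs1 : a (GRing.one k) = 1.
Proof.
have h1 : a (GRing.one k) = a (GRing.one k) * a (GRing.one k) by rewrite -abs_mul mulr1.
have h2 : 0 < a (GRing.one k) by apply: abs_gt0; apply/eqP; exact: oner_neq0.
nra.
Qed.

Lemma absN x : a (GRing.opp x) = a x.
Proof.
have h1 : a (GRing.opp (GRing.one k)) * a (GRing.opp (GRing.one k)) = 1.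
  by rewrite -abs_mul mulrNN mulr1 abs1.
have h3 : a (GRing.opp (GRing.one k)) = 1 by have := abs_ge0 (GRing.opp (GRing.one k)); nra.
by rewrite -mulN1r abs_mul h3 Rmult_1_l.
Qed.

Lemma abs_add_dominant u v : a u < a v -> a (GRing.add u v) = a v.
Proof.
move=> H; have h1 := abs_ultra u v.
have h2 := abs_ultra (GRing.opp u) (GRing.add u v).
rewrite addKr absN in h2.
move: h1 h2; rewrite /Rmax; do 2 case: Rle_dec; lra.
Qed.

Lemma abs_inv x : x <> GRing.zero -> a (GRing.inv x) = / a x.
Proof.
move=> H; have hx := abs_gt0 H.
have : a (GRing.mul x (GRing.inv x)) = 1 by rewrite mulfV ?abs1 //; apply/eqP.
rewrite abs_mul => h; field_simplify_eq; lra.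
Qed.

(* The open sets of k used below: the strict sublevel and superlevel sets of
   |.|, which are open because |.| is locally constant off 0. *)
Lemma kopen_abs_lt c : k_open a (fun y => a y < c).
Proof.
move=> y hy; exists (c - a y); split; first lra.
move=> z hz; have e : z = GRing.add (GRing.add z (GRing.opp y)) y by rewrite subrK.
have := abs_ultra (GRing.add z (GRing.opp y)) y; rewrite -e.
rewrite /Rmax; case: Rle_dec; have := abs_ge0 y; lra.
Qed.

Lemma kopen_abs_nlt c : 0 < c -> k_open a (fun y => ~ a y < c).
Proof.
move=> hc y hy; exists c; split => // z hz.
have e : z = GRing.add (GRing.add z (GRing.opp y)) y by rewrite subrK.
rewrite e abs_add_dominant //; lra.
Qed.

Lemma kopen_inv V : k_open a V -> k_open a (fun y => y <> GRing.zero /\ V (GRing.inv y)).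
Proof.
move=> hV y [hy Vy]; case: (hV _ Vy) => eps [heps Heps].
have ty := abs_gt0 hy.
exists (Rmin (a y) (eps * (a y * a y))); split.
  by apply: Rmin_pos => //; apply: Rmult_lt_0_compat => //; apply: Rmult_lt_0_compat.
move=> z hz; set q := a (GRing.add z (GRing.opp y)) in hz.
have hq1 : q < a y by have := Rmin_l (a y) (eps * (a y * a y)); lra.
have hq2 : q < eps * (a y * a y) by have := Rmin_r (a y) (eps * (a y * a y)); lra.
have haz : a z = a y.
  by rewrite -[z](subrK y) abs_add_dominant.
have hz0 : z <> GRing.zero by move/abs_eq0; lra.
have e : GRing.add (GRing.inv z) (GRing.opp (GRing.inv y)) =
         GRing.mul (GRing.opp (GRing.add z (GRing.opp y)))
                   (GRing.mul (GRing.inv z) (GRing.inv y)).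
  have hy' : y != GRing.zero by apply/eqP.
  have hz' : z != GRing.zero by apply/eqP.
  by rewrite opprB mulrDl mulrCA mulfV // mulr1 mulNr mulrA mulfV // mul1r.
split => //; apply: Heps.
rewrite e !abs_mul absN !abs_inv // haz -/q.
have hq : q * (/ a y * / a y) = q / (a y * a y) by field; lra.
rewrite hq; apply: (Rmult_lt_reg_r (a y * a y)); first nra.
by rewrite /Rdiv Rmult_assoc Rinv_l; nra.
Qed.
End AbsoluteValue.

Section Clopen.
Variables (X : Type) (OX : (X -> Prop) -> Prop).
Hypothesis HX : is_topology OX.

Lemma open_of_local (P : X -> Prop) :
  (forall x, P x -> exists Q, OX Q /\ Q x /\ forall z, Q z -> P z) -> OX P.
Proof.
move=> H.
have -> : P = (fun x => exists U, (OX U /\ forall z, U z -> P z) /\ U x).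
  apply: pred_ext => x; split.
  - by move=> Px; case: (H x Px) => Q [HQ [Qx HQP]]; exists Q.
  - by move=> [U [[_ hU] Ux]]; exact: hU.
by apply: (proj2 (proj2 HX)) => U [].
Qed.

Lemma open_full : OX (fun _ => True). Proof. by case: HX. Qed.

Lemma open_inter U V : OX U -> OX V -> OX (fun x => U x /\ V x).
Proof. by case: HX => _ [h _]; exact: h. Qed.

Lemma clopen_compl U : clopen OX U -> clopen OX (fun x => ~ U x).
Proof.
move=> [oU oUc]; split => //; apply: open_of_local => x hx.
by exists U; split => //; split => [|z hz]; [exact: NNPP | tauto].
Qed.

Lemma clopen_inter U V : clopen OX U -> clopen OX V -> clopen OX (fun x => U x /\ V x).
Proof.
move=> [oU oUc] [oV oVc]; split; first exact: open_inter.
apply: open_of_local => x hx; case: (classic (U x)) => hu.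
- by exists (fun x => ~ V x); split => //; split; tauto.
- by exists (fun x => ~ U x); split => //; split; tauto.
Qed.

Lemma clopen_union U V : clopen OX U -> clopen OX V -> clopen OX (fun x => U x \/ V x).
Proof.
move=> hU hV; have [oW oWc] := clopen_inter (clopen_compl hU) (clopen_compl hV).
split; last first.
  by apply: open_of_local => x hx; exists (fun x => ~ U x /\ ~ V x); split => //; split; tauto.
apply: open_of_local => x hx; exists (fun x => ~ (~ U x /\ ~ V x)).
by split => //; split => [|z]; tauto.
Qed.

Lemma clopen_full : clopen OX (fun _ => True).
Proof. by split; [exact: open_full | apply: open_of_local => x]. Qed.

Lemma clopen_empty : clopen OX (fun _ => False).
Proof.
have -> : (fun _ : X => False) = (fun _ => ~ True) by apply: pred_ext; tauto.
exact: clopen_compl clopen_full.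
Qed.
End Clopen.

Section BoundedFunctions.
Variables (X : Type) (OX : (X -> Prop) -> Prop).
Hypothesis HX : is_topology OX.
Variables (k : fieldType) (a : k -> R).
Hypothesis Ha : nonarch_abs a.

Lemma cbd_ext (f g : Cbd OX a) : (forall x, proj1_sig f x = proj1_sig g x) -> f = g.
Proof.
case: f => f hf; case: g => g hg /= H.
have e : f = g := functional_extensionality _ _ H.
by subst g; f_equal; apply: proof_irrelevance.
Qed.

(* Extension by zero of a function given on a clopen set U; it is continuous
   because U and its complement are open. *)
Definition extend_by_zero (U : X -> Prop) (g : X -> k) : X -> k :=
  fun x => if excluded_middle_informative (U x) then g x else GRing.zero.

Lemma extend_by_zero_in U g x : U x -> extend_by_zero U g x = g x.
Proof. by rewrite /extend_by_zero; case: excluded_middle_informative. Qed.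

Lemma extend_by_zero_out U g x : ~ U x -> extend_by_zero U g x = GRing.zero.
Proof. by rewrite /extend_by_zero; case: excluded_middle_informative. Qed.

Lemma extend_by_zero_cbd U g M : clopen OX U ->
  (forall V, k_open a V -> forall x, U x -> V (g x) ->
      exists Q, OX Q /\ Q x /\ forall z, Q z -> V (g z)) ->
  (forall x, U x -> a (g x) <= M) -> is_cbd OX a (extend_by_zero U g).
Proof.
move=> [oU oUc] Hc Hb; split.
- move=> V hV; apply: (open_of_local HX) => x.
  case: (classic (U x)) => hx.
  + rewrite extend_by_zero_in // => Vx; case: (Hc V hV x hx Vx) => Q [oQ [Qx HQ]].
    exists (fun z => Q z /\ U z); split; first exact: open_inter.
    by split => // z [Qz Uz]; rewrite extend_by_zero_in //; exact: HQ.
  + rewrite extend_by_zero_out // => Vx.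
    by exists (fun z => ~ U z); split => //; split => // z hz; rewrite extend_by_zero_out.
- exists (Rmax M 0) => x; case: (classic (U x)) => hx.
  + by rewrite extend_by_zero_in //; apply: Rle_trans (Hb x hx) (Rmax_l _ _).
  + by rewrite extend_by_zero_out // (abs0 Ha); exact: Rmax_r.
Qed.

Lemma const_cbd c : is_cbd OX a (fun _ => c).
Proof.
split; last by exists (a c) => x; lra.
move=> V hV; apply: (open_of_local HX) => x Vc.
by exists (fun _ => True); split; [exact: open_full | split].
Qed.

Definition cst c : Cbd OX a := exist _ _ (const_cbd c).

Lemma indicator_exists U : clopen OX U -> exists h : Cbd OX a, is_indicator U h.
Proof.
move=> cU; have Hb : forall x, U x -> a (GRing.one k) <= 1 by move=> x _; rewrite (abs1 Ha); lra.
have Hc V (_ : k_open a V) x (_ : U x) (hV : V (GRing.one k)) :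
    exists Q, OX Q /\ Q x /\ forall z, Q z -> V (GRing.one k).
  by exists (fun _ => True); split; [exact: open_full | split].
exists (exist _ _ (extend_by_zero_cbd cU Hc Hb)) => x /=.
by split => hx; [rewrite extend_by_zero_in | rewrite extend_by_zero_out].
Qed.

Lemma indicator_unique U (h h' : Cbd OX a) : is_indicator U h -> is_indicator U h' -> h = h'.
Proof.
move=> H H'; apply: cbd_ext => x; case: (H x) => h1 h2; case: (H' x) => h3 h4.
by case: (classic (U x)) => hx; [rewrite h1 // h3 | rewrite h2 // h4].
Qed.

Lemma indicator_equiv U V (h : Cbd OX a) :
  (forall x, U x <-> V x) -> is_indicator U h -> is_indicator V h.
Proof. by move=> /pred_ext ->. Qed.

(* Since k is ultrametric, the level sets {|f| < c}, c > 0, are clopen. *)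
Lemma clopen_abs_lt (f : Cbd OX a) c : 0 < c -> clopen OX (fun x => a (proj1_sig f x) < c).
Proof.
move=> hc; case: (proj2_sig f) => fc _; split.
- by apply: (fc (fun y => a y < c)); apply: kopen_abs_lt.
- by apply: (fc (fun y => ~ a y < c)); apply: kopen_abs_nlt.
Qed.

Lemma mul_indicator_exists (f h : Cbd OX a) U : clopen OX U -> is_indicator U h ->
  exists r : Cbd OX a, forall x, proj1_sig r x = GRing.mul (proj1_sig f x) (proj1_sig h x).
Proof.
move=> cU Hh; case: (proj2_sig f) => fc [M hM].
have Hc V (hV : k_open a V) x (_ : U x) (Vx : V (proj1_sig f x)) :
    exists Q, OX Q /\ Q x /\ forall z, Q z -> V (proj1_sig f z).
  by exists (fun z => V (proj1_sig f z)); split; [exact: fc | split].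
exists (exist _ _ (extend_by_zero_cbd cU Hc (fun x _ => hM x))) => x /=.
case: (Hh x) => h1 h2; case: (classic (U x)) => hx.
- by rewrite extend_by_zero_in // h1 // mulr1.
- by rewrite extend_by_zero_out // h2 // mulr0.
Qed.

Lemma inverse_on_exists (f h : Cbd OX a) U c : clopen OX U -> is_indicator U h -> 0 < c ->
  (forall x, U x -> c <= a (proj1_sig f x)) ->
  exists r : Cbd OX a, (forall x, a (proj1_sig r x) <= / c) /\
    forall x, proj1_sig h x = GRing.mul (proj1_sig r x) (proj1_sig f x).
Proof.
move=> cU Hh hc Hf; case: (proj2_sig f) => fc _.
have fnz x : U x -> proj1_sig f x <> GRing.zero.
  by move=> hx e; have := Hf x hx; rewrite e (abs0 Ha); lra.
pose g x := GRing.inv (proj1_sig f x).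
have Hc V (hV : k_open a V) x (hx : U x) (Vx : V (g x)) :
    exists Q, OX Q /\ Q x /\ forall z, Q z -> V (g z).
  exists (fun z => proj1_sig f z <> GRing.zero /\ V (g z)); split.
  + exact: (fc (fun y => y <> GRing.zero /\ V (GRing.inv y)) (kopen_inv Ha hV)).
  + by split => [|z []]; first by split => //; exact: fnz.
have Hb x : U x -> a (g x) <= / c.
  by move=> hx; rewrite /g (abs_inv Ha); [apply: Rinv_le_contravar => //; exact: Hf | exact: fnz].
exists (exist _ _ (extend_by_zero_cbd cU Hc Hb)); split => x /=; case: (classic (U x)) => hx.
- by rewrite extend_by_zero_in //; exact: Hb.
- by rewrite extend_by_zero_out // (abs0 Ha); left; exact: Rinv_0_lt_compat.
- by case: (Hh x) => h1 _; rewrite extend_by_zero_in // h1 // mulVf //; apply/eqP; exact: fnz.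
- by case: (Hh x) => _ h2; rewrite extend_by_zero_out // h2 // mul0r.
Qed.
End BoundedFunctions.

Section Seminorm.
Variables (X : Type) (OX : (X -> Prop) -> Prop).
Hypothesis HX : is_topology OX.
Variables (k : fieldType) (a : k -> R).
Hypothesis Ha : nonarch_abs a.
Variable s : Cbd OX a -> R.
Hypothesis Hs : is_bmult_seminorm s.

Lemma sn_ge0 f : 0 <= s f. Proof. by case: Hs. Qed.

Lemma sn_mul (f g h : Cbd OX a) :
  (forall x, proj1_sig h x = GRing.mul (proj1_sig f x) (proj1_sig g x)) -> s h = s f * s g.
Proof. by case: Hs => _ [H _]; exact: H. Qed.

Lemma sn_one (h : Cbd OX a) : (forall x, proj1_sig h x = GRing.one k) -> s h = 1.
Proof. by case: Hs => _ [_ [H _]]; exact: H. Qed.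

Lemma sn_add (f g h : Cbd OX a) :
  (forall x, proj1_sig h x = GRing.add (proj1_sig f x) (proj1_sig g x)) ->
  s h <= Rmax (s f) (s g).
Proof. by case: Hs => _ [_ [_ [H _]]]; exact: H. Qed.

Lemma sn_scale c (f h : Cbd OX a) :
  (forall x, proj1_sig h x = GRing.mul c (proj1_sig f x)) -> s h = a c * s f.
Proof. by case: Hs => _ [_ [_ [_ [H _]]]]; exact: H. Qed.

Lemma sn_bounded (f : Cbd OX a) M : (forall x, a (proj1_sig f x) <= M) -> s f <= M.
Proof. by case: Hs => _ [_ [_ [_ [_ H]]]]; exact: H. Qed.

Lemma sn_zero (h : Cbd OX a) : (forall x, proj1_sig h x = GRing.zero) -> s h = 0.
Proof.
move=> H; rewrite (@sn_scale GRing.zero h) ?(abs0 Ha) ?Rmult_0_l // => x.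
by rewrite H mul0r.
Qed.

(* 1_U is idempotent, so s(1_U) is 0 or 1. *)
Lemma sn_indicator01 U (h : Cbd OX a) : is_indicator U h -> s h = 0 \/ s h = 1.
Proof.
move=> Hh; have e : s h = s h * s h.
  apply: sn_mul => x; case: (Hh x) => h1 h2; case: (classic (U x)) => hx.
  - by rewrite h1 // mulr1.
  - by rewrite h2 // mulr0.
have := sn_ge0 h; nra.
Qed.

(* 1_U 1_V = 1_{U n V}. *)
Lemma sn_indicator_inter U V (hU hV hW : Cbd OX a) : is_indicator U hU ->
  is_indicator V hV -> is_indicator (fun x => U x /\ V x) hW -> s hW = s hU * s hV.
Proof.
move=> HU HV HW; apply: sn_mul => x.
case: (HU x) (HV x) (HW x) => [h1 h2] [h3 h4] [h5 h6].
case: (classic (U x)) => hx; case: (classic (V x)) => hy.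
- by rewrite h5 // h1 // h3 // mulr1.
- by rewrite h6 ?h4 ?mulr0 //; tauto.
- by rewrite h6 ?h2 ?mul0r //; tauto.
- by rewrite h6 ?h2 ?mul0r //; tauto.
Qed.

(* Since 1_U 1_{X\U} = 0 and 1_U + 1_{X\U} = 1, exactly one of s(1_U) and
   s(1_{X\U}) equals 1, the other 0. *)
Lemma sn_indicator_compl U (hU hV : Cbd OX a) : is_indicator U hU ->
  is_indicator (fun x => ~ U x) hV -> (s hU = 1 /\ s hV = 0) \/ (s hU = 0 /\ s hV = 1).
Proof.
move=> HU HV.
have e0 : s (cst HX a GRing.zero) = s hU * s hV.
  apply: sn_mul => x /=; case: (HU x) (HV x) => [h1 h2] [h3 h4].
  by case: (classic (U x)) => hx; [rewrite h4 // mulr0 | rewrite h2 // mul0r].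
have e1 : s (cst HX a (GRing.one k)) <= Rmax (s hU) (s hV).
  apply: sn_add => x /=; case: (HU x) (HV x) => [h1 h2] [h3 h4].
  by case: (classic (U x)) => hx; [rewrite h1 // h4 // addr0 | rewrite h2 // h3 // add0r].
rewrite sn_zero // in e0; rewrite sn_one // in e1; move: e0 e1.
case: (sn_indicator01 HU) (sn_indicator01 HV) => -> [] ->; [| by right | by left |];
  rewrite /Rmax; case: Rle_dec; lra.
Qed.

Lemma sn_le_on U (h f : Cbd OX a) M : clopen OX U -> is_indicator U h -> s h <> 0 ->
  (forall x, U x -> a (proj1_sig f x) <= M) -> s f <= M.
Proof.
move=> cU Hh hs Hf.
have h1 : s h = 1 by case: (sn_indicator01 Hh).
have [x0 Ux0] : exists x, U x.
  apply: NNPP => hne; apply: hs; apply: sn_zero => x.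
  by case: (Hh x) => _ ->  // hx; apply: hne; exists x.
have M0 : 0 <= M by have := Hf x0 Ux0; have := abs_ge0 Ha (proj1_sig f x0); lra.
case: (mul_indicator_exists HX Ha f cU Hh) => r Hr.
rewrite -[s f]Rmult_1_r -h1 -(sn_mul Hr); apply: sn_bounded => x; rewrite Hr.
case: (Hh x) => g1 g2; case: (classic (U x)) => hx.
- by rewrite g1 // mulr1; exact: Hf.
- by rewrite g2 // mulr0 (abs0 Ha).
Qed.

Lemma sn_ge_on U (h f : Cbd OX a) c : clopen OX U -> is_indicator U h -> s h <> 0 -> 0 < c ->
  (forall x, U x -> c <= a (proj1_sig f x)) -> c <= s f.
Proof.
move=> cU Hh hs hc Hf.
have h1 : s h = 1 by case: (sn_indicator01 Hh).
case: (inverse_on_exists HX Ha cU Hh hc Hf) => r [Hb Hr].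
have e := sn_mul Hr; rewrite h1 in e.
have hr : c * s r <= 1.
  have := Rmult_le_compat_l c _ _ (Rlt_le _ _ hc) (sn_bounded Hb).
  by rewrite Rinv_r //; lra.
have := sn_ge0 r; have := sn_ge0 f; nra.
Qed.
End Seminorm.

Section Support.
Variables (X : Type) (OX : (X -> Prop) -> Prop).
Hypothesis HX : is_topology OX.
Variables (k : fieldType) (a : k -> R).
Hypothesis Ha : nonarch_abs a.

Lemma F_supp_iff (p : BSC OX a) U (h : Cbd OX a) : is_indicator U h ->
  (F_supp p U <-> clopen OX U /\ proj1_sig p h <> 0).
Proof.
move=> Hh; split.
- by move=> [cU [h' [Hh' hs]]]; rewrite (indicator_unique Hh Hh').
- by move=> [cU hs]; split => //; exists h.
Qed.

(* F_supp(x) is an ultrafilter of CO(X): stability under intersections and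
   enlargements comes from the multiplicativity of s on indicators, the
   dichotomy U / X\U from sn_indicator_compl. *)
Lemma F_supp_UF (p : BSC OX a) : is_UF OX (F_supp p).
Proof.
case: p => s Hs /=; set p := exist _ s Hs.
split; first by move=> U [].
split.
  case: (indicator_exists HX Ha (clopen_empty HX)) => h Hh.
  rewrite (F_supp_iff p Hh) => [[_]]; apply; apply: (sn_zero Ha Hs) => x.
  by case: (Hh x) => _ ->.
split.
  move=> U V /= [cU [hU [HU sU]]] [cV [hV [HV sV]]].
  have cW := clopen_inter HX cU cV.
  case: (indicator_exists HX Ha cW) => hW HW.
  rewrite (F_supp_iff p HW) /= (sn_indicator_inter Hs HU HV HW); split => //.
  by case: (sn_indicator01 Hs HU) => // ->; case: (sn_indicator01 Hs HV) => // ->; lra.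
split.
  move=> U V cU /= [cV [hV [HV sV]]].
  have cW := clopen_union HX cU cV.
  case: (indicator_exists HX Ha cW) => hW HW.
  rewrite (F_supp_iff p HW) /=; split => // sW.
  have HV' : is_indicator (fun x => (U x \/ V x) /\ V x) hV.
    by apply: indicator_equiv HV => x; tauto.
  by have := sn_indicator_inter Hs HW HV HV'; rewrite sW Rmult_0_l.
move=> U cU; have cUc := clopen_compl HX cU.
case: (indicator_exists HX Ha cU) => hU HU.
case: (indicator_exists HX Ha cUc) => hV HV.
rewrite (F_supp_iff p HU) (F_supp_iff p HV) /=.
case: (sn_indicator_compl HX Ha Hs HU HV) => [[-> _]|[_ ->]]; [left | right]; split => //; lra.
Qed.

Lemma ideal_full_of_one (I : Cbd OX a -> Prop) :
  is_ideal I -> I (cst HX a (GRing.one k)) -> forall f, I f.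
Proof.
move=> [_ [_ [_ Imul]]] I1 f; apply: (Imul (cst HX a (GRing.one k)) f f) => // x /=.
by rewrite mulr1.
Qed.

Lemma supp_ideal (p : BSC OX a) : is_ideal (supp p).
Proof.
case: p => s Hs; rewrite /supp /=.
split; first by move=> h H; apply: (sn_zero Ha Hs).
split.
  move=> f h H hf; rewrite (@sn_scale _ _ _ _ _ Hs (GRing.opp (GRing.one k)) f) ?hf ?Rmult_0_r //.
  by move=> x; rewrite H mulN1r.
split.
  move=> f g h H hf hg; have := sn_add Hs H; rewrite hf hg; have := sn_ge0 Hs h.
  by rewrite /Rmax; case: Rle_dec; lra.
by move=> f g h H hf; rewrite (sn_mul Hs H) hf Rmult_0_r.
Qed.

(* supp(x) is maximal: if g is in an ideal J but |g|_x = c' > 0, put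
   c = c'/2 and U = {|g| < c}.  Then s(1_U) = 0 (else s g <= c), so 1_U lies
   in supp(x), while g is invertible on X \ U, so 1_{X\U} lies in J; hence
   1 = 1_U + 1_{X\U} lies in J. *)
Lemma supp_maximal (p : BSC OX a) : is_maximal_ideal (supp p).
Proof.
split; first exact: supp_ideal.
case: p => s Hs; rewrite /supp /=.
split; first by exists (cst HX a (GRing.one k)); rewrite (sn_one Hs) //; lra.
move=> J HJ Hinc.
case: (classic (exists g, J g /\ s g <> 0)) => [[g [Jg sg]]|hno]; last first.
  left => f; split; last exact: Hinc.
  by move=> Jf; apply: NNPP => hf; apply: hno; exists f.
right; apply: ideal_full_of_one => //.
have sg0 : 0 < s g by have := sn_ge0 Hs g; lra.
pose c := s g / 2.
have hc : 0 < c by rewrite /c; lra.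
have cW := clopen_abs_lt Ha g hc.
case: (indicator_exists HX Ha cW) => hW HW.
case: (indicator_exists HX Ha (clopen_compl HX cW)) => hN HN.
have sW : s hW = 0.
  apply: NNPP => sW; have := sn_le_on HX Ha Hs cW HW sW (fun x hx => Rlt_le _ _ hx).
  by rewrite /c; lra.
case: (inverse_on_exists HX Ha (clopen_compl HX cW) HN hc (fun x hx => Rnot_lt_le _ _ hx))
  => r [_ Hr].
case: HJ => [_ [_ [Jadd Jmul]]].
apply: (Jadd hW hN); [| exact: Hinc | exact: (Jmul g r hN Hr Jg)] => x /=.
case: (HW x) (HN x) => [h1 h2] [h3 h4].
case: (classic (a (proj1_sig g x) < c)) => hx.
- by rewrite h1 // h4 // addr0.
- by rewrite h2 // h3 // add0r.
Qed.
End Support.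

(* The limit seminorm of a clopen ultrafilter F:
     lim_F |f| = inf { M : |f| <= M on some U in F }. *)
Section LimitSeminorm.
Variables (X : Type) (OX : (X -> Prop) -> Prop).
Hypothesis HX : is_topology OX.
Variables (k : fieldType) (a : k -> R).
Hypothesis Ha : nonarch_abs a.
Variable F : (X -> Prop) -> Prop.
Hypothesis HF : is_UF OX F.

Lemma UF_clopen U : F U -> clopen OX U. Proof. by case: HF => H _; exact: H. Qed.

Lemma UF_nonempty U : F U -> exists x, U x.
Proof.
move=> hU; apply: NNPP => hn; case: HF => _ [H _]; apply: H.
by have <- : U = (fun _ => False) by apply: pred_ext => x; split => // hx; apply: hn; exists x.
Qed.

Lemma UF_inter U V : F U -> F V -> F (fun x => U x /\ V x).
Proof. by case: HF => _ [_ [H _]]; exact: H. Qed.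

Lemma UF_dich U : clopen OX U -> F U \/ F (fun x => ~ U x).
Proof. by case: HF => _ [_ [_ [_ H]]]; exact: H. Qed.

Lemma UF_up A B : F A -> clopen OX B -> (forall x, A x -> B x) -> F B.
Proof.
move=> hA cB hAB; case: (UF_dich cB) => // hB.
by case: (UF_nonempty (UF_inter hA hB)) => x [/hAB].
Qed.

Lemma UF_full : F (fun _ => True).
Proof.
case: (UF_dich (clopen_empty HX)) => h; first by case: HF => _ [H _]; case: H.
exact: (UF_up h (clopen_full HX)).
Qed.

Definition bounded_along (f : Cbd OX a) (M : R) : Prop :=
  exists U, F U /\ forall x, U x -> a (proj1_sig f x) <= M.

Definition lower_bound (f : Cbd OX a) (y : R) : Prop :=
  forall M, bounded_along f M -> y <= M.

Lemma lower_bound_0 f : lower_bound f 0.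
Proof.
move=> M [U [hU H]]; case: (UF_nonempty hU) => x hx.
by have := H x hx; have := abs_ge0 Ha (proj1_sig f x); lra.
Qed.

Lemma lower_bound_bounded f : bound (lower_bound f).
Proof.
case: (proj2_sig f) => _ [M hM]; exists M => y hy; apply: hy.
by exists (fun _ => True); split; [exact: UF_full | move=> x _; exact: hM].
Qed.

Definition limF (f : Cbd OX a) : R :=
  proj1_sig (completeness _ (@lower_bound_bounded f) (ex_intro _ 0 (@lower_bound_0 f))).

Lemma limF_lub f : is_lub (lower_bound f) (limF f). Proof. exact: proj2_sig. Qed.

Lemma limF_ge0 f : 0 <= limF f. Proof. exact: (proj1 (limF_lub f)) (@lower_bound_0 f). Qed.

Lemma limF_le_on U f M : F U -> (forall x, U x -> a (proj1_sig f x) <= M) -> limF f <= M.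
Proof. by move=> hU H; apply: (proj2 (limF_lub f)) => y; apply; exists U. Qed.

Lemma limF_ge_on U f c : F U -> (forall x, U x -> c <= a (proj1_sig f x)) -> c <= limF f.
Proof.
move=> hU H; apply: (proj1 (limF_lub f)) => M [V [hV HV]].
case: (UF_nonempty (UF_inter hU hV)) => x [h1 h2].
by have := H x h1; have := HV x h2; lra.
Qed.

Lemma limF_lt_level f c : limF f < c -> F (fun x => a (proj1_sig f x) < c).
Proof.
move=> hc; have c0 : 0 < c by have := limF_ge0 f; lra.
case: (UF_dich (clopen_abs_lt Ha f c0)) => // hN.
by have := limF_ge_on hN (fun x hx => Rnot_lt_le _ _ hx); lra.
Qed.

Lemma limF_gt_level f c : 0 < c -> c < limF f -> F (fun x => ~ a (proj1_sig f x) < c).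
Proof.
move=> c0 hc; case: (UF_dich (clopen_abs_lt Ha f c0)) => // hL.
by have := limF_le_on hL (fun x hx => Rlt_le _ _ hx); lra.
Qed.

(* Multiplicativity: |fg| <= MN on {|f| < M} n {|g| < N}, and |fg| >= cd on
   {|f| >= c} n {|g| >= d}, for M, N above and c, d below the limits. *)
Lemma limF_mul (f g h : Cbd OX a) :
  (forall x, proj1_sig h x = GRing.mul (proj1_sig f x) (proj1_sig g x)) ->
  limF h = limF f * limF g.
Proof.
move=> H; apply: Rle_antisym.
- apply: le_mul_of_gt; try exact: limF_ge0.
  move=> M N hM hN; apply: (limF_le_on (UF_inter (limF_lt_level hM) (limF_lt_level hN))).
  move=> x [x1 x2]; rewrite H (abs_mul Ha).
  by apply: Rmult_le_compat; try exact: abs_ge0; exact: Rlt_le.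
- apply: mul_le_of_lt; try exact: limF_ge0.
  move=> c d c0 hc d0 hd.
  apply: (limF_ge_on (UF_inter (limF_gt_level c0 hc) (limF_gt_level d0 hd))).
  move=> x [x1 x2]; rewrite H (abs_mul Ha).
  by apply: Rmult_le_compat; try lra; exact: Rnot_lt_le.
Qed.

Lemma limF_cst c : limF (cst HX a c) = a c.
Proof.
apply: Rle_antisym.
- by apply: (limF_le_on UF_full) => x _ /=; lra.
- by apply: (limF_ge_on UF_full) => x _ /=; lra.
Qed.

(* Ultrametric inequality: if lim_F |f|, lim_F |g| < c < lim_F |f+g|, then
   |f+g| < c on the intersection of the two level sets, a contradiction. *)
Lemma limF_add (f g h : Cbd OX a) :
  (forall x, proj1_sig h x = GRing.add (proj1_sig f x) (proj1_sig g x)) ->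
  limF h <= Rmax (limF f) (limF g).
Proof.
move=> H; apply: Rnot_lt_le => hlt.
pose c := (Rmax (limF f) (limF g) + limF h) / 2.
have hf : limF f < c by have := Rmax_l (limF f) (limF g); rewrite /c; lra.
have hg : limF g < c by have := Rmax_r (limF f) (limF g); rewrite /c; lra.
have : limF h <= c.
  apply: (limF_le_on (UF_inter (limF_lt_level hf) (limF_lt_level hg))) => x [x1 x2].
  rewrite H; apply: Rle_trans (abs_ultra Ha _ _) _; apply: Rmax_lub; lra.
by rewrite /c; lra.
Qed.

(* lim_F is a point of BSC_k(X); homogeneity follows from multiplicativity,
   since c f is the product of the constant c with f. *)
Lemma limF_seminorm : is_bmult_seminorm limF.
Proof.
split; first exact: limF_ge0.
split; first exact: limF_mul.
split.
  move=> h H; rewrite -(abs1 Ha) -(limF_cst (GRing.one k)); congr limF.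
  exact: cbd_ext.
split; first exact: limF_add.
split.
  move=> c f h H; rewrite -limF_cst; apply: limF_mul => x /=; exact: H.
by move=> f M H; apply: (limF_le_on UF_full) => x _; exact: H.
Qed.

Lemma limF_indicator U (h : Cbd OX a) : is_indicator U h ->
  (F U <-> clopen OX U /\ limF h <> 0).
Proof.
move=> Hh; split.
- move=> hU; split; first exact: UF_clopen.
  have : 1 <= limF h.
    by apply: (limF_ge_on hU) => x hx; case: (Hh x) => -> // _; rewrite (abs1 Ha); lra.
  lra.
- move=> [cU hs]; case: (UF_dich cU) => // hN; case: hs.
  apply: Rle_antisym; last exact: limF_ge0.
  by apply: (limF_le_on hN) => x hx; case: (Hh x) => _ -> //; rewrite (abs0 Ha); lra.
Qed.
End LimitSeminorm.

(* The final topology of a map g : A -> B (the sets whose preimage is open)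
   is a topology; used to check continuity on a subbasis. *)
Lemma final_topology {A B : Type} (O : (A -> Prop) -> Prop) (g : A -> B) :
  is_topology O -> is_topology (fun W : B -> Prop => O (fun x => W (g x))).
Proof.
move=> [Ofull [Ointer Ounion]]; split => //; split => [U V|Fam HFam]; first exact: Ointer.
have -> : (fun x => exists W, Fam W /\ W (g x)) =
    (fun x => exists U, (exists W, Fam W /\ U = (fun y => W (g y))) /\ U x).
  apply: pred_ext => x; split => [[W [hW Wx]]|[U [[W [hW ->]] Ux]]]; last by exists W.
  by exists (fun y => W (g y)); split => //; exists W.
by apply: Ounion => U [W [hW ->]]; exact: HFam.
Qed.

Section Homeomorphism.
Variables (X : Type) (OX : (X -> Prop) -> Prop).
Hypothesis HX : is_topology OX.
Variables (k : fieldType) (a : k -> R).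
Hypothesis Ha : nonarch_abs a.

Definition supp_UF (p : BSC OX a) : UF OX := exist _ (F_supp p) (F_supp_UF HX Ha p).

Definition limit_point (F : UF OX) : BSC OX a :=
  exist _ (limF HX Ha (proj2_sig F)) (limF_seminorm HX Ha (proj2_sig F)).

Lemma BSC_ext (p q : BSC OX a) : (forall f, proj1_sig p f = proj1_sig q f) -> p = q.
Proof.
case: p => p hp; case: q => q hq /= H.
have e : p = q := functional_extensionality _ _ H.
by subst q; f_equal; apply: proof_irrelevance.
Qed.

Lemma UF_ext (F G : UF OX) : (forall U, proj1_sig F U <-> proj1_sig G U) -> F = G.
Proof.
case: F => F hF; case: G => G hG /= /pred_ext e.
by subst G; f_equal; apply: proof_irrelevance.
Qed.

(* |f|_p is the limit of |f| along F_supp(p): the localisation inequalities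
   compare |f|_p with the bounds of |f| on the sets of F_supp(p). *)
Lemma limit_point_supp_UF p : limit_point (supp_UF p) = p.
Proof.
apply: BSC_ext => f; case: p => s Hs /=.
set HF := F_supp_UF HX Ha (exist _ s Hs).
apply: Rle_antisym.
- apply: le_epsilon => eps heps; pose c := s f + eps.
  have hc : 0 < c by have := sn_ge0 Hs f; rewrite /c; lra.
  case: (UF_dich HF (clopen_abs_lt Ha f hc)) => hL.
  + by apply: (limF_le_on HX Ha HF hL) => x hx; rewrite /c in hx; lra.
  + case: hL => cN [h [Hh hs]].
    by have := sn_ge_on HX Ha Hs cN Hh hs hc (fun x hx => Rnot_lt_le _ _ hx); rewrite /c; lra.
- apply: (proj1 (limF_lub HX Ha HF f)) => M [U [[cU [h [Hh hs]]] HU]].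
  exact: (sn_le_on HX Ha Hs cU Hh hs HU).
Qed.

Lemma supp_UF_limit_point F : supp_UF (limit_point F) = F.
Proof.
apply: UF_ext => U; case: F => Fp HF /=; split.
- by move=> [cU [h [Hh hs]]]; apply/(limF_indicator HX Ha HF Hh).
- move=> hU; case: (indicator_exists HX Ha (UF_clopen HF hU)) => h Hh.
  by apply/(F_supp_iff _ Hh); apply/(limF_indicator HX Ha HF Hh).
Qed.

(* The preimage of the basic open set {F : U in F} is {p : |1_U|_p > 1/2}. *)
Lemma supp_UF_continuous : continuous (@BSC_open X OX k a) (@UF_open X OX) supp_UF.
Proof.
move=> W hW O HO HS; apply: (open_of_local HO) => p Wp.
case: (hW _ Wp) => U [cU [hUp Hall]].
case: (indicator_exists HX Ha cU) => h Hh.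
exists (fun q : BSC OX a => 1/2 < proj1_sig q h); split.
  apply: HS; exists h, (fun r => 1/2 < r); split => //.
  move=> x hx; have hd : 0 < x - 1/2 by lra.
  exists (mkposreal _ hd) => y; rewrite /disc /= => hy.
  by have := Rabs_def2 _ _ hy; lra.
split.
- case: ((F_supp_iff p Hh).1 hUp) => _; case: p {Wp hUp} => s Hs /= hs.
  by case: (sn_indicator01 Hs Hh) => e; [| rewrite e; lra].
- by move=> q hq; apply: Hall => /=; apply/(F_supp_iff q Hh); split => //=; lra.
Qed.

Lemma UF_open_topology : is_topology (@UF_open X OX).
Proof.
split.
  move=> F _; exists (fun _ => True); split; first exact: clopen_full.
  by split => //; exact: (UF_full HX (proj2_sig F)).
split.
  move=> A B hA hB F [hAF hBF].
  case: (hA F hAF) => U1 [c1 [F1 H1]]; case: (hB F hBF) => U2 [c2 [F2 H2]].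
  exists (fun x => U1 x /\ U2 x); split; first exact: clopen_inter.
  split; first exact: (UF_inter (proj2_sig F) F1 F2).
  move=> G hG; split.
  + by apply: H1; apply: (UF_up (proj2_sig G) hG c1) => x [].
  + by apply: H2; apply: (UF_up (proj2_sig G) hG c2) => x [].
move=> Fam HFam F [U0 [hU0 hF]].
case: (HFam U0 hU0 F hF) => U [cU [FU HU]].
by exists U; split => //; split => // G hG; exists U0; split => //; exact: HU.
Qed.

Lemma limit_point_upper (F : UF OX) f d : 0 < d -> exists U, clopen OX U /\ proj1_sig F U /\
  forall G : UF OX, proj1_sig G U ->
    proj1_sig (limit_point G) f < proj1_sig (limit_point F) f + d.
Proof.
move=> hd; set r := proj1_sig (limit_point F) f.
have hc : 0 < r + d / 2 by have := limF_ge0 HX Ha (proj2_sig F) f; rewrite /r /=; lra.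
exists (fun x => a (proj1_sig f x) < r + d / 2); split; first exact: clopen_abs_lt.
split; first by apply (limF_lt_level (HX := HX) (Ha := Ha) (HF := proj2_sig F)); rewrite /r /=; lra.
move=> G hG /=; have := limF_le_on HX Ha (proj2_sig G) hG (fun x hx => Rlt_le _ _ hx); lra.
Qed.

Lemma limit_point_lower (F : UF OX) f d : 0 < d -> exists U, clopen OX U /\ proj1_sig F U /\
  forall G : UF OX, proj1_sig G U ->
    proj1_sig (limit_point F) f - d < proj1_sig (limit_point G) f.
Proof.
move=> hd; set r := proj1_sig (limit_point F) f.
case: (Rlt_or_le 0 (r - d / 2)) => hc.
- exists (fun x => ~ a (proj1_sig f x) < r - d / 2).
  split; first exact: clopen_compl (clopen_abs_lt Ha f hc).
  split; first by apply (limF_gt_level (HX := HX) (Ha := Ha) (HF := proj2_sig F)) => //; rewrite /r /=; lra.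
  move=> G hG /=; have := limF_ge_on HX Ha (proj2_sig G) hG (fun x hx => Rnot_lt_le _ _ hx).
  lra.
- exists (fun _ => True); split; first exact: clopen_full.
  split; first exact: (UF_full HX (proj2_sig F)).
  by move=> G _ /=; have := limF_ge0 HX Ha (proj2_sig G) f; lra.
Qed.

Lemma limit_point_continuous : continuous (@UF_open X OX) (@BSC_open X OX k a) limit_point.
Proof.
move=> V hV; apply: (hV (fun W => UF_open (fun F => W (limit_point F)))).
  exact: final_topology UF_open_topology.
move=> W [f [V' [oV' HW]]] F /HW hr.
case: (oV' _ hr) => [[d hd]] Hd /=.
case: (limit_point_upper F f hd) => U1 [c1 [F1 H1]].
case: (limit_point_lower F f hd) => U2 [c2 [F2 H2]].
exists (fun x => U1 x /\ U2 x); split; first exact: clopen_inter.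
split; first exact: (UF_inter (proj2_sig F) F1 F2).
move=> G hG; apply/HW; apply: Hd; rewrite /disc /=.
have h1 := H1 G (UF_up (proj2_sig G) hG c1 (fun x hx => proj1 hx)).
have h2 := H2 G (UF_up (proj2_sig G) hG c2 (fun x hx => proj2 hx)).
by simpl in h1, h2; apply: Rabs_def1; lra.
Qed.
End Homeomorphism.

Theorem mainTheorem1 (X : Type) (OX : (X -> Prop) -> Prop)
  (HX : is_topology OX) (k : fieldType) (a : k -> R)
  (Ha : nonarch_abs a) (Hc : abs_complete a) :
  (forall p : BSC OX a, is_maximal_ideal (supp p)) /\
  exists Phi : BSC OX a -> UF OX,
    (forall (p : BSC OX a) (U : X -> Prop), proj1_sig (Phi p) U <-> F_supp p U) /\
    homeomorphism (@BSC_open X OX k a) (@UF_open X OX) Phi.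
Proof.
split; first exact: (supp_maximal HX Ha).
exists (supp_UF HX Ha); split; first by [].
exists (limit_point HX Ha); split; first exact: limit_point_supp_UF.
split; first exact: supp_UF_limit_point.
split; [exact: supp_UF_continuous | exact: limit_point_continuous].
Qed.
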